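(* Let $N\ge1$, $i\in\langle N\rangle$ and let $u$ be a word over $\langle N\rangle$ with $|u|\ge2$. Then the antipode of the right Lagrange Hopf algebra $\mathcal R^N$ satisfies \[ S_{\mathcal R}(Y_u^i)=\sum_{T\in\mathbf{RT}_u^i}(-1)^{\mathbf v(T)}\,\Lambda_{\downarrow r}(T). \]
   Context: Let $\langle N\rangle=\{1,\dots,N\}$, $|u|$ the length of a word $u$. The interval partition Hopf algebra $\mathcal H=\mathcal H^N$ is, as an algebra, the free unital associative complex algebra on generators $Y_u^i$ ($i\in\langle N\rangle$, $|u|\ge 2$); set $Y_j^i=\delta_{ij}1$ for letters $i,j$. Its counit $\varepsilon$ is the algebra homomorphism with $\varepsilon(Y_u^i)=0$, and its comultiplication is the algebra homomorphism $\Delta$ with $\Delta(Y_u^i)=\sum_{q=1}^{p}\sum_{(C_1,\dots,C_q)}\sum_{v\in\langle N\rangle^q} Y_{u|C_1}^{v(1)}\cdots Y_{u|C_q}^{v(q)}\otimes Y_v^i$ ($p=|u|$, the middle sum over all partitions of $\{1,\dots,p\}$ into $q$ nonempty consecutive intervals $C_1<\dots<C_q$, $u|C_k$ the subword indexed by $C_k$). It has an antipode $S_{\mathcal H}$. Let $\mathbf t$ be the algebra anti-automorphism of $\mathcal H$ fixing each generator: $\mathbf t(Y_{u_1}^{i_1}\cdots Y_{u_n}^{i_n})=Y_{u_n}^{i_n}\cdots Y_{u_1}^{i_1}$. The right Lagrange Hopf algebra $\mathcal R^N$ is $\mathcal H$ with multiplication $\mathbf t\circ m\circ(\mathbf t\otimes\mathbf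 t)$, comultiplication $(\mathbf t\otimes\mathbf t)\circ\Delta\circ\mathbf t$, the same unit and counit, and antipode $S_{\mathcal R}=\mathbf t S_{\mathcal H}\mathbf t$. Trees: a colored planar tree is a finite rooted tree with linearly ordered children at each vertex and a color $c(x)\in\langle N\rangle$ at each vertex, up to isomorphism. Leaves have no children; a tree is reduced if every non-leaf vertex has at least two children. $\mathbf{RT}_u^i$: reduced colored planar trees with root colored $i$ and leaves, read left to right, colored $u(1),\dots,u(p)$. For a non-leaf $x$ with children $y_1<\dots<y_k$, $Y(x)=Y^{c(x)}_{c(y_1)\cdots c(y_k)}$. $\mathbf v(T)$ = number of non-leaf vertices. $\Lambda_{\downarrow r}(T)=Y(z_1)\cdots Y(z_r)$ where $z_1,\dots,z_r$ are the non-leaf vertices listed in preorder with children visited from left to right (root first; after a vertex, the subtrees of its children are traversed from the leftmost to the rightmost child). *)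

From HB Require Import structures.
From mathcomp Require Import all_boot all_order all_algebra.
From mathcomp Require Import reals.
From mathcomp Require Import complex.
From Stdlib Require List.
Set Implicit Arguments. Unset Strict Implicit. Unset Printing Implicit Defensive.
Import Order.TTheory GRing.Theory Num.Theory.
Local Open Scope ring_scope.

Section IntervalPartitionHopf.
Variable N : nat.
Variable K : comNzRingType.

(** Letters of the alphabet <N> = {1,...,N} are represented by 'I_N
    (i.e. relabelled 0,...,N-1).  Words are sequences of letters. *)
Definition word := seq 'I_N.

Definition gen := {p : 'I_N * word | (1 < size p.2)%N}.

(** Monomials (words in the generators) = basis of the free algebra H. *)
Definition mon := seq gen.

(** An element of H is represented by a finite formal linear combination of
    monomials; its coefficient on a monomial is obtained by summing. *)
Definition elt := seq (K * mon).
Definition coef (x : elt) (m : mon) : K := \sum_(p <- x | p.2 == m) p.1.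
Definition eqH (x y : elt) : Prop := forall m : mon, coef x m = coef y m.

Definition zeroH : elt := [::].
Definition oneH : elt := [:: (1, [::])].
Definition addH (x y : elt) : elt := x ++ y.
Definition scaleH (c : K) (x : elt) : elt := [seq (c * p.1, p.2) | p <- x].
Definition mulH (x y : elt) : elt :=
  [seq (a.1 * b.1, a.2 ++ b.2) | a <- x, b <- y].
Definition prodH (xs : seq elt) : elt := foldr mulH oneH xs.

(** Y_u^i, with the convention Y_j^i = delta_{ij} 1 for letters j. *)
Definition Yel (i : 'I_N) (u : word) : elt :=
  match insub (i, u) : option gen with
  | Some g => [:: (1, [:: g])]
  | None => if u == [:: i] then oneH else zeroH
  end.

(** Tensor square H (x) H, same representation on pairs of monomials. *)
Definition elt2 := seq (K * (mon * mon)).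
Definition coef2 (x : elt2) (m : mon * mon) : K :=
  \sum_(p <- x | p.2 == m) p.1.
Definition one2 : elt2 := [:: (1, ([::], [::]))].
Definition tens (x y : elt) : elt2 :=
  [seq (a.1 * b.1, (a.2, b.2)) | a <- x, b <- y].
Definition mul2 (x y : elt2) : elt2 :=
  [seq (a.1 * b.1, (a.2.1 ++ b.2.1, a.2.2 ++ b.2.2)) | a <- x, b <- y].

(** All ways of cutting a word into consecutive nonempty intervals
    C_1 < ... < C_q (each interval partition listed exactly once),
    given as the list of subwords u|C_1, ..., u|C_q. *)
Fixpoint splits (T : Type) (s : seq T) : seq (seq (seq T)) :=
  match s with
  | [::] => [:: [::]]
  | x :: s' =>
      flatten [seq (match p with
                    | [::] => [:: [:: [:: x]]]
                    | c :: p' => [:: [:: x] :: p; (x :: c) :: p']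
                    end) | p <- splits s']
  end.

Fixpoint allwords (q : nat) : seq word :=
  if q is q'.+1 then [seq i :: w | i <- enum 'I_N, w <- allwords q']
  else [:: [::]].

Definition Delta_gen (g : gen) : elt2 :=
  let i := (val g).1 in let u := (val g).2 in
  flatten [seq flatten [seq tens (prodH [seq Yel vc.1 vc.2 | vc <- zip v cs])
                                 (Yel i v)
                       | v <- allwords (size cs)]
          | cs <- splits u].

Definition Delta (m : mon) : elt2 := foldr mul2 one2 (map Delta_gen m).

Definition epsH (m : mon) : K := if m is [::] then 1 else 0.

(** A linear map H -> H is given by its values on the monomial basis. *)
Definition is_antipode (S : mon -> elt) : Prop :=
  forall m : mon,
    eqH (flatten [seq scaleH p.1 (mulH (S p.2.1) [:: (1, p.2.2)]) | p <- Delta m])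
        (scaleH (epsH m) oneH)
 /\ eqH (flatten [seq scaleH p.1 (mulH [:: (1, p.2.1)] (S p.2.2)) | p <- Delta m])
        (scaleH (epsH m) oneH).

Definition tH (x : elt) : elt := [seq (p.1, rev p.2) | p <- x].

Definition linext (S : mon -> elt) (x : elt) : elt :=
  flatten [seq scaleH p.1 (S p.2) | p <- x].

(** Antipode of the right Lagrange Hopf algebra: S_R = t S_H t. *)
Definition antipodeR (S : mon -> elt) (x : elt) : elt := tH (linext S (tH x)).

Inductive ctree : Type := CNode of 'I_N & seq ctree.

Definition color (T : ctree) : 'I_N := let: CNode c _ := T in c.

Fixpoint leaves (T : ctree) : word :=
  let: CNode c ts := T in
  if ts is [::] then [:: c] else flatten (map leaves ts).

Fixpoint reduced (T : ctree) : bool :=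
  let: CNode c ts := T in
  if ts is [::] then true else ((1 < size ts)%N && all reduced ts).

Fixpoint nvert (T : ctree) : nat :=
  let: CNode c ts := T in
  if ts is [::] then 0%N else (sumn (map nvert ts)).+1.

(** Lambda_{down r}: product of Y(z) over non-leaf vertices in preorder. *)
Fixpoint lambda_dr (T : ctree) : elt :=
  let: CNode c ts := T in
  if ts is [::] then oneH
  else mulH (Yel c (map color ts)) (prodH (map lambda_dr ts)).

Definition inRT (i : 'I_N) (u : word) (T : ctree) : Prop :=
  reduced T /\ color T = i /\ leaves T = u.

Definition enumRT (i : 'I_N) (u : word) (ts : seq ctree) : Prop :=
  List.NoDup ts /\ forall T, List.In T ts <-> inRT i u T.

Definition tree_sum (ts : seq ctree) : elt :=
  flatten [seq scaleH ((-1) ^+ nvert T) (lambda_dr T) | T <- ts].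

End IntervalPartitionHopf.

From HB Require Import structures.
From mathcomp Require Import all_boot all_order all_algebra.
From mathcomp Require Import reals.
From mathcomp Require Import complex.
From mathcomp Require Import zify.
Set Implicit Arguments. Unset Strict Implicit. Unset Printing Implicit Defensive.
Import GRing.Theory.
Local Open Scope ring_scope.

(* Grade H by deg Y_u^i = |u| - 1.  The only term of Delta m whose left
   factor has degree at least deg m is m (x) 1, so the left antipode identity
   m (S (x) id) Delta = eta eps expresses S m through the values of S in lower
   degree: a left antipode is unique.
   A left antipode F (tree_antipode) is obtained by sending Y_u^i to t of the
   signed tree sum over RT_u^i and extending anti-multiplicatively.  Sorting
   the trees by the interval partition u|C_1, ..., u|C_q cut out by the
   subtrees of the root and by the colours v of the root's children gives
     F(Y_u^i) = - sum_(q >= 2, v) F(Y_(u|C_q)^(v q)) ... F(Y_(u|C_1)^(v 1)) Y_v^i,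
   which is the left antipode identity on Y_u^i, its q = 1 term being
   F(Y_u^i).  Hence S_H = F, and S_R (Y_u^i) = t (F (Y_u^i)) is the tree sum. *)

Section Pairing.
Variable K : comNzRingType.

Definition pairing (T : Type) (x : seq (K * T)) (f : T -> K) : K :=
  \sum_(p <- x) p.1 * f p.2.

Definition supp (T : Type) (x : seq (K * T)) : seq T := [seq p.2 | p <- x].

Lemma pairing_nil T (f : T -> K) : pairing [::] f = 0.
Proof. exact: big_nil. Qed.

Lemma pairing_cons T (a : K * T) x f : pairing (a :: x) f = a.1 * f a.2 + pairing x f.
Proof. exact: big_cons. Qed.

Lemma pairing_seq1 T c (t : T) f : pairing [:: (c, t)] f = c * f t.
Proof. by rewrite pairing_cons pairing_nil addr0. Qed.

Lemma pairing_flatten T U (s : seq U) (F : U -> seq (K * T)) f :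
  pairing (flatten [seq F a | a <- s]) f = \sum_(a <- s) pairing (F a) f.
Proof. by rewrite /pairing big_flatten /= big_map. Qed.

Lemma eq_pairing T (x : seq (K * T)) f g : f =1 g -> pairing x f = pairing x g.
Proof. by move=> fg; apply: eq_bigr => p _; rewrite fg. Qed.

Lemma eq_in_pairing (T : eqType) (x : seq (K * T)) f g :
  {in supp x, f =1 g} -> pairing x f = pairing x g.
Proof.
move=> fg; rewrite /pairing big_seq [RHS]big_seq.
by apply: eq_bigr => p px; rewrite fg // map_f.
Qed.

Lemma pairingD T (x : seq (K * T)) f g :
  pairing x (fun a => f a + g a) = pairing x f + pairing x g.
Proof. by rewrite /pairing -big_split; apply: eq_bigr => p _; rewrite mulrDr. Qed.

Lemma pairing0 T (x : seq (K * T)) : pairing x (fun _ => 0) = 0.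
Proof. by rewrite /pairing big1 // => p _; rewrite mulr0. Qed.

Lemma pairing_sum T U (x : seq (K * T)) (s : seq U) (G : U -> T -> K) :
  pairing x (fun a => \sum_(j <- s) G j a) = \sum_(j <- s) pairing x (G j).
Proof. by rewrite /pairing exchange_big; apply: eq_bigr => p _; rewrite big_distrr. Qed.

Lemma exchange_pairing T U (x : seq (K * T)) (y : seq (K * U)) (G : T -> U -> K) :
  pairing x (fun a => pairing y (G a)) = pairing y (fun b => pairing x (G^~ b)).
Proof.
rewrite /pairing; under eq_bigr do rewrite big_distrr.
rewrite exchange_big; apply: eq_bigr => q _; rewrite big_distrr.
by apply: eq_bigr => p _; rewrite /= mulrCA.
Qed.

Lemma pairing_allpairs T U V (x : seq (K * T)) (y : seq (K * U)) (h : T -> U -> V) f :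
  pairing [seq (a.1 * b.1, h a.2 b.2) | a <- x, b <- y] f
  = pairing x (fun a => pairing y (fun b => f (h a b))).
Proof.
rewrite /pairing big_allpairs_dep; apply: eq_bigr => a _; rewrite big_distrr.
by apply: eq_bigr => b _; rewrite /= mulrA.
Qed.

End Pairing.

Section Elements.
Variables (N : nat) (K : comNzRingType).
Local Notation elt := (elt N K).
Local Notation mon := (mon N).

Lemma pairing_scaleH c (x : elt) f : pairing (scaleH c x) f = c * pairing x f.
Proof. by rewrite /pairing big_map big_distrr; apply: eq_bigr => p _; rewrite /= mulrA. Qed.

Lemma pairing_mulH (x y : elt) f :
  pairing (mulH x y) f = pairing x (fun a => pairing y (fun b => f (a ++ b))).
Proof. exact: pairing_allpairs. Qed.

Lemma pairing_oneH (f : mon -> K) : pairing (oneH N K) f = f [::].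
Proof. by rewrite pairing_seq1 mul1r. Qed.

Lemma pairing_tH (x : elt) f : pairing (tH x) f = pairing x (fun a => f (rev a)).
Proof. by rewrite /pairing big_map. Qed.

Lemma pairing_linext (S : mon -> elt) (x : elt) f :
  pairing (linext S x) f = pairing x (fun a => pairing (S a) f).
Proof. by rewrite pairing_flatten; apply: eq_bigr => p _; rewrite pairing_scaleH. Qed.

Lemma pairing_prodH_cat (xs ys : seq elt) f :
  pairing (prodH (xs ++ ys)) f
  = pairing (prodH xs) (fun a => pairing (prodH ys) (fun b => f (a ++ b))).
Proof.
elim: xs f => [|x xs IH] f /=; first by rewrite pairing_oneH.
rewrite !pairing_mulH; apply: eq_pairing => a; rewrite IH.
by apply: eq_pairing => b; apply: eq_pairing => c; rewrite catA.
Qed.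

Lemma pairing_prodH_rcons (xs : seq elt) x f :
  pairing (prodH (rcons xs x)) f
  = pairing (prodH xs) (fun a => pairing x (fun b => f (a ++ b))).
Proof.
rewrite -cats1 pairing_prodH_cat; apply: eq_pairing => a; rewrite pairing_mulH.
by apply: eq_pairing => b; rewrite pairing_oneH cats0.
Qed.

Lemma pairing_tens (x y : elt) f :
  pairing (tens x y) f = pairing x (fun a => pairing y (fun b => f (a, b))).
Proof. exact: pairing_allpairs. Qed.

Lemma pairing_mul2 (x y : elt2 N K) f :
  pairing (mul2 x y) f
  = pairing x (fun a => pairing y (fun b => f (a.1 ++ b.1, a.2 ++ b.2))).
Proof. exact: pairing_allpairs. Qed.

Lemma pairing_one2 (f : mon * mon -> K) : pairing (one2 N K) f = f ([::], [::]).
Proof. by rewrite pairing_seq1 mul1r. Qed.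

Lemma coef_pairing (x : elt) m : coef x m = pairing x (fun w => (w == m)%:R).
Proof.
rewrite /coef /pairing big_mkcond; apply: eq_bigr => p _.
by case: eqP; rewrite ?mulr1 ?mulr0.
Qed.

Lemma pairing_coef (x : elt) (W : seq mon) f : uniq W -> {subset supp x <= W} ->
  pairing x f = \sum_(w <- W) coef x w * f w.
Proof.
move=> uW xW; under [RHS]eq_bigr do rewrite big_distrl.
rewrite (exchange_big_dep xpredT) //= /pairing big_seq [RHS]big_seq.
apply: eq_bigr => p px; have pW : p.2 \in W by apply/xW/map_f.
rewrite -big_filter (eq_filter (a2 := pred1 p.2)) => [|w]; last by rewrite /= eq_sym.
by rewrite filter_pred1_uniq ?big_seq1.
Qed.

Lemma eqH_pairingP (x y : elt) : eqH x y <-> forall f, pairing x f = pairing y f.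
Proof.
split=> [exy f|exy m]; last by rewrite !coef_pairing exy.
pose W := undup (supp x ++ supp y); have uW : uniq W := undup_uniq _.
rewrite (pairing_coef f uW) => [|w wx]; last by rewrite mem_undup mem_cat wx.
rewrite [RHS](pairing_coef f uW) => [|w wy]; last by rewrite mem_undup mem_cat wy orbT.
by apply: eq_bigr => w _; rewrite exy.
Qed.

End Elements.

Lemma uniq_flatten_keyed (U V : eqType) (s : seq U) (f : U -> seq V) (k : V -> U) :
    uniq s -> {in s, forall a, uniq (f a)} -> {in s, forall a, {in f a, forall y, k y = a}} ->
  uniq (flatten [seq f a | a <- s]).
Proof.
elim: s => [|a s IH] //= /andP [as_ us] uf kf.
have ufs : {in s, forall b, uniq (f b)}.
  by move=> b bs; apply: uf; rewrite inE bs orbT.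
have kfs : {in s, forall b, {in f b, forall y, k y = b}}.
  by move=> b bs; apply: kf; rewrite inE bs orbT.
rewrite cat_uniq uf ?mem_head // IH // andbT.
apply/hasPn => y /flattenP [r /mapP [b bs ->] yb]; apply/negP => ya.
by move: as_; rewrite -(kf a (mem_head _ _) y ya) (kfs b bs y yb) bs.
Qed.

Lemma uniq_eq_seq1 (T : eqType) (s : seq T) x :
  uniq s -> x \in s -> {in s, forall y, y = x} -> s = [:: x].
Proof.
case: s => [|y [|z s]] //= uys _ eqx; first by rewrite (eqx y) ?mem_head.
move: uys; have [-> ->] : y = x /\ z = x by split; apply: eqx; rewrite !inE eqxx ?orbT.
by rewrite inE eqxx.
Qed.

Lemma mem_zip2 (S T : eqType) (s : seq S) (t : seq T) p : p \in zip s t -> p.2 \in t.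
Proof.
elim: s t => [|x s IH] [|y t] //=; rewrite !inE => /orP [/eqP -> | /IH ->].
  by rewrite /= eqxx.
by rewrite orbT.
Qed.

Section Splits.
Variable T : eqType.
Implicit Types (u : seq T) (cs : seq (seq T)).

Lemma mem_splits u cs : cs \in splits u -> flatten cs = u /\ all (fun c => c != [::]) cs.
Proof.
elim: u cs => [|x s IH] cs /=; first by rewrite inE => /eqP ->.
case/flattenP => r /mapP [[|c p] /IH [<- /= ap] ->{r}]; first by rewrite inE => /eqP ->.
by case/andP: ap => cn ap; rewrite !inE => /orP [] /eqP -> /=; rewrite ?cn.
Qed.

Lemma splits_complete u cs :
  flatten cs = u -> all (fun c => c != [::]) cs -> cs \in splits u.
Proof.
elim: u cs => [|x s IH] [|[|y b] cs] //= [<- e] acs; apply/flattenP.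
case: b e => [|z b] e.
- exists (if cs is c :: p then [:: [:: y] :: cs; (y :: c) :: p] else [:: [:: [:: y]]]).
    by apply/mapP; exists cs => //; apply: IH.
  by case: cs {e acs} => [|c p]; rewrite !inE eqxx.
- exists [:: [:: y] :: (z :: b) :: cs; (y :: z :: b) :: cs].
    by apply/mapP; exists ((z :: b) :: cs) => //; apply: IH.
  by rewrite !inE eqxx orbT.
Qed.

Lemma splits_uniq u : uniq (splits u).
Proof.
elim: u => [|x s IH] //=.
(* [key r] recovers the partition of s from which r was built. *)
pose key (r : seq (seq T)) :=
  if r is b :: rest then (if behead b == [::] then rest else behead b :: rest) else [::].
apply: (uniq_flatten_keyed (k := key) IH) => [p /mem_splits [_]|p /mem_splits [_]].
- case: p => [|c p] //= /andP [cn _]; rewrite andbT inE.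
  by apply: contra cn => /eqP [<-].
- case: p => [|c p] /=; first by move=> _ r; rewrite mem_seq1 => /eqP ->.
  by case/andP=> cn _ r; rewrite !inE => /orP [] /eqP -> //=; rewrite (negbTE cn).
Qed.

Lemma splits_short u : u != [::] ->
  [seq cs <- splits u | (size cs < 2)%N] = [:: [:: u]].
Proof.
move=> un; apply: uniq_eq_seq1; first by rewrite filter_uniq ?splits_uniq.
  by rewrite mem_filter /= splits_complete //= ?cats0 // un.
move=> cs; rewrite mem_filter => /andP [cs2 /mem_splits [fcs _]]; rewrite -fcs in un *.
by case: cs cs2 un {fcs} => [|c [|]] //= _ _; rewrite cats0.
Qed.

Lemma size_flatten_blocks cs : all (fun c => c != [::]) cs ->
  (sumn [seq (size c).-1 | c <- cs] + size cs)%N = size (flatten cs).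
Proof.
elim: cs => [|[|y c] cs IH] //= /IH.
by rewrite size_cat /=; lia.
Qed.

Lemma size_block cs c : all (fun c => c != [::]) cs -> c \in cs ->
  (size c + (size cs).-1 <= size (flatten cs))%N.
Proof.
elim: cs => [|d cs IH] //= /andP [dn acs]; rewrite inE size_cat => /orP [/eqP ->|ccs].
  by have := size_flatten_blocks acs; lia.
have := IH acs ccs; case: d dn => // y d _ /=.
by case: cs {IH acs} ccs => //= c' cs _; lia.
Qed.

End Splits.

Section Words.
Variable N : nat.

Lemma mem_allwords q (w : word N) : (w \in allwords N q) = (size w == q).
Proof.
elim: q w => [|q IH] w; first by case: w.
apply/allpairsP/idP => [[[a b] [_ /= bq ->]]|] /=; first by rewrite eqSS -IH.
by case: w => [|j w] //= sw; exists (j, w); rewrite mem_enum IH.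
Qed.

Lemma allwords_uniq q : uniq (allwords N q).
Proof.
elim: q => [|q IH] //=; apply: allpairs_uniq; rewrite ?enum_uniq //.
by move=> [a b] [c d] _ _ /= [-> ->].
Qed.

Lemma big_allwords1 (R : Type) (idx : R) (op : Monoid.law idx) (F : word N -> R) :
  \big[op/idx]_(v <- allwords N 1) F v = \big[op/idx]_(j <- enum 'I_N) F [:: j].
Proof. by rewrite big_allpairs_dep; apply: eq_bigr => j _; rewrite big_seq1. Qed.

End Words.

Section Grading.
Variables (N : nat) (K : comNzRingType).
Local Notation elt := (elt N K).
Local Notation elt2 := (elt2 N K).
Local Notation mon := (mon N).
Local Notation gen := (gen N).
Local Notation word := (word N).

Definition deg (m : mon) : nat := sumn [seq (size (val g).2).-1 | g <- m].

Lemma deg_cat (a b : mon) : deg (a ++ b) = (deg a + deg b)%N.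
Proof. by rewrite /deg map_cat sumn_cat. Qed.

Lemma deg1 (g : gen) : deg [:: g] = (size (val g).2).-1.
Proof. exact: addn0. Qed.

Lemma gen_size (g : gen) : (1 < size (val g).2)%N.
Proof. exact: valP g. Qed.

Lemma Yel_gen (g : gen) : Yel K (val g).1 (val g).2 = [:: (1, [:: g])].
Proof.
rewrite /Yel -surjective_pairing; case: insubP => [g' _ /val_inj -> //|].
by rewrite gen_size.
Qed.

Lemma Yel_Sub i (u : word) (su : (1 < size u)%N) :
  Yel K i u = [:: (1, [:: (Sub (i, u) su : gen)])].
Proof. exact: (Yel_gen (Sub (i, u) su)). Qed.

Lemma Yel_letter i j : Yel K i [:: j] = if j == i then oneH N K else zeroH N K.
Proof. by rewrite /Yel insubN //= eqseq_cons andbT. Qed.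

Lemma supp_Yel i (w : word) a : a \in supp (Yel K i w) -> deg a = (size w).-1 /\ rev a = a.
Proof.
rewrite /Yel; case: insubP => [g _ e|]; first by rewrite inE => /eqP ->; rewrite deg1 e.
by case: ifP => [/eqP -> _|//]; rewrite inE => /eqP ->.
Qed.

Lemma supp_mulH (x y : elt) c : c \in supp (mulH x y) ->
  exists a b, [/\ a \in supp x, b \in supp y & c = a ++ b].
Proof.
case/mapP => p /allpairsP [[a b] [ax bx ->]] ->{c p}.
by exists a.2, b.2; split; rewrite ?map_f.
Qed.

Lemma deg_supp_prodH_Yel (l : seq ('I_N * word)) a :
  a \in supp (prodH [seq Yel K vc.1 vc.2 | vc <- l]) ->
  deg a = sumn [seq (size vc.2).-1 | vc <- l].
Proof.
elim: l a => [|vc l IH] a /=; first by rewrite inE => /eqP ->.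
by case/supp_mulH => b [c [/supp_Yel [db _] /IH dc ->]]; rewrite deg_cat db dc.
Qed.

Lemma deg_Delta_gen_term (u : word) cs v a : cs \in splits u -> size v = size cs ->
  a \in supp (prodH [seq Yel K vc.1 vc.2 | vc <- zip v cs]) -> (deg a + size cs)%N = size u.
Proof.
move=> /mem_splits [<- ac] sv /deg_supp_prodH_Yel ->; rewrite -size_flatten_blocks //.
by congr (sumn _ + _)%N; elim: v cs sv {ac} => [|j v IH] [|c cs] //= [/IH ->].
Qed.

Lemma pairing_Delta_gen (g : gen) f :
  pairing (Delta_gen K g) f =
  \sum_(cs <- splits (val g).2) \sum_(v <- allwords N (size cs))
     pairing (prodH [seq Yel K vc.1 vc.2 | vc <- zip v cs])
        (fun a => pairing (Yel K (val g).1 v) (fun b => f (a, b))).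
Proof.
rewrite pairing_flatten; apply: eq_bigr => cs _.
by rewrite pairing_flatten; apply: eq_bigr => v _; rewrite pairing_tens.
Qed.

Lemma Delta_cons (g : gen) (m : mon) : Delta K (g :: m) = mul2 (Delta_gen K g) (Delta K m).
Proof. by []. Qed.

Definition left_deg_le (x : elt2) (d : nat) := forall f,
  pairing x f = pairing x (fun p => if (deg p.1 <= d)%N then f p else 0).

Lemma left_deg_le_Delta_gen (g : gen) : left_deg_le (Delta_gen K g) (deg [:: g]).
Proof.
move=> f; rewrite !pairing_Delta_gen; apply: eq_big_seq => cs cs_u.
apply: eq_big_seq => v; rewrite mem_allwords => /eqP sv.
apply: eq_in_pairing => a /(deg_Delta_gen_term cs_u sv) da /=.
have cs0 : (0 < size cs)%N by move: cs_u (gen_size g) => /mem_splits [<- _]; case: cs {sv da}.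
by have -> : (deg a <= deg [:: g])%N by rewrite deg1; lia.
Qed.

Lemma left_deg_le_Delta (m : mon) : left_deg_le (Delta K m) (deg m).
Proof.
elim: m => [|g m IH] f; first by rewrite !pairing_one2.
rewrite Delta_cons !pairing_mul2 left_deg_le_Delta_gen [in RHS]left_deg_le_Delta_gen.
apply: eq_pairing => a; case: ifP => // ha.
rewrite IH [in RHS]IH; apply: eq_pairing => b; case: ifP => // hb.
by rewrite /= deg_cat -cat1s deg_cat leq_add.
Qed.

Lemma pairing_Delta_gen_top (g : gen) f :
  pairing (Delta_gen K g) (fun p => if (deg [:: g] <= deg p.1)%N then f p else 0)
  = f ([:: g], [::]).
Proof.
have un : (val g).2 != [::] by case: (val g).2 (gen_size g).
rewrite pairing_Delta_gen (bigID (fun cs => (size cs < 2)%N)) /=.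
rewrite -big_filter splits_short // big_seq1.
rewrite [X in _ + X]big1_seq ?addr0 => [|cs /andP [cs2 cs_u]]; last first.
  rewrite big_seq big1 // => v; rewrite mem_allwords => /eqP sv.
  rewrite -[RHS](pairing0 (prodH [seq Yel K vc.1 vc.2 | vc <- zip v cs])).
  apply: eq_in_pairing => a /(deg_Delta_gen_term cs_u sv) da /=.
  have lt : (deg a < deg [:: g])%N
    by rewrite deg1 -da; case: (size cs) cs2 => [|[|k]] // _; rewrite !addnS ltnS leq_addr.
  by rewrite leqNgt lt /= pairing0.
rewrite big_allwords1 /= (bigD1_seq (val g).1) ?mem_enum ?enum_uniq //=.
rewrite big1_seq ?addr0 => [|j /andP [ji _]].
  by rewrite pairing_mulH Yel_letter eqxx Yel_gen pairing_seq1 !pairing_oneH /= leqnn !mul1r.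
rewrite pairing_mulH Yel_letter (negbTE ji) -[RHS](pairing0 (Yel K j (val g).2)).
by apply: eq_pairing => a; rewrite pairing_oneH pairing_nil.
Qed.

Lemma pairing_Delta_top (m : mon) f :
  pairing (Delta K m) (fun p => if (deg m <= deg p.1)%N then f p else 0) = f (m, [::]).
Proof.
elim: m f => [|g m IH] f; first by rewrite pairing_one2.
rewrite Delta_cons pairing_mul2.
transitivity (pairing (Delta_gen K g) (fun a => if (deg [:: g] <= deg a.1)%N then
   pairing (Delta K m) (fun b => if (deg m <= deg b.1)%N then f (a.1 ++ b.1, a.2 ++ b.2) else 0)
   else 0)); last first.
  rewrite -[RHS](pairing_Delta_gen_top g (fun a => f (a.1 ++ m, a.2 ++ [::]))).
  by apply: eq_pairing => a; case: ifP => // _; rewrite IH.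
rewrite left_deg_le_Delta_gen [RHS]left_deg_le_Delta_gen; apply: eq_pairing => a.
case: ifP => // ha; rewrite left_deg_le_Delta.
case: ifP => hga; [rewrite [RHS]left_deg_le_Delta | rewrite -[RHS](pairing0 (Delta K m))].
all: apply: eq_pairing => b; case: ifP => // hb; rewrite /= deg_cat -cat1s deg_cat.
  by have -> : (deg [:: g] + deg m <= deg a.1 + deg b.1)%N = (deg m <= deg b.1)%N
    by apply/idP/idP; lia.
by have -> : (deg [:: g] + deg m <= deg a.1 + deg b.1)%N = false by apply/idP; lia.
Qed.

Definition left_conv (S : mon -> elt) (m : mon) (h : mon -> K) : K :=
  pairing (Delta K m) (fun p => pairing (S p.1) (fun w => h (w ++ p.2))).

Definition left_antipode (S : mon -> elt) : Prop :=
  forall m h, left_conv S m h = epsH K m * h [::].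

Definition lower_conv (S : mon -> elt) (m : mon) (h : mon -> K) : K :=
  pairing (Delta K m) (fun p =>
    if (deg p.1 < deg m)%N then pairing (S p.1) (fun w => h (w ++ p.2)) else 0).

Lemma left_conv_top S m h : left_conv S m h = pairing (S m) h + lower_conv S m h.
Proof.
rewrite -[X in X + _](eq_pairing _ (fun w => congr1 h (cats0 w))).
rewrite -[X in X + _](pairing_Delta_top m (fun p => pairing (S p.1) (fun w => h (w ++ p.2)))).
by rewrite -pairingD; apply: eq_pairing => p; case: leqP; rewrite ?addr0 ?add0r.
Qed.

Lemma eq_lower_conv S S' m h :
    (forall m', (deg m' < deg m)%N -> forall h, pairing (S m') h = pairing (S' m') h) ->
  lower_conv S m h = lower_conv S' m h.
Proof. by move=> SS'; apply: eq_pairing => p; case: ifP => // /SS' ->. Qed.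

Lemma left_antipode_unique S S' : left_antipode S -> left_antipode S' ->
  forall m h, pairing (S m) h = pairing (S' m) h.
Proof.
move=> HS HS' m; have [n] := ubnP (deg m); elim: n m => // n IH m dm h.
have := HS m h; rewrite -(HS' m h) !left_conv_top (@eq_lower_conv S S') => [/addIr //|m' lt].
by apply: IH; lia.
Qed.

End Grading.

Section TreeEquality.
Variable N : nat.

Definition ctree_nested_ind (P : ctree N -> Prop)
    (IH : forall c ts, List.Forall P ts -> P (CNode c ts)) : forall t, P t :=
  fix F t := let: CNode c ts := t in IH c ts ((fix G l : List.Forall P l :=
    match l with
    | [::] => List.Forall_nil P
    | x :: l' => List.Forall_cons x (F x) (G l')
    end) ts).

Fixpoint ctree_enc (t : ctree N) : GenTree.tree 'I_N :=
  let: CNode c ts := t in GenTree.Node 0 (GenTree.Leaf c :: map ctree_enc ts).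

Fixpoint ctree_dec (t : GenTree.tree 'I_N) : option (ctree N) :=
  match t with
  | GenTree.Node _ (GenTree.Leaf c :: l) => Some (CNode c (pmap ctree_dec l))
  | _ => None
  end.

Lemma ctree_encK : pcancel ctree_enc ctree_dec.
Proof.
elim/ctree_nested_ind => c ts IH /=; congr (Some (CNode c _)).
by elim: IH => //= t l -> _ ->.
Qed.

HB.instance Definition _ := Equality.copy (ctree N) (pcan_type ctree_encK).

Lemma leaves_neq0 (t : ctree N) : leaves t != [::].
Proof.
elim/ctree_nested_ind: t => c [|t ts] //= /List.Forall_cons_iff [].
by case: (leaves t).
Qed.

End TreeEquality.

Fixpoint prodseq (T : Type) (Ls : seq (seq T)) : seq (seq T) :=
  if Ls is L :: Ls' then [seq t :: ts | t <- L, ts <- prodseq Ls'] else [:: [::]].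

Lemma mem_prodseq (T : eqType) (A : Type) (f : A -> seq T) (l : seq A) ts :
  (ts \in prodseq [seq f x | x <- l]) = all2 (fun t x => t \in f x) ts l.
Proof.
elim: l ts => [|x l IH] [|t ts] //=; first by apply/allpairsP => -[[a b] [_ _]].
apply/allpairsP/andP => [[[a b] [/= ha hb [-> ->]]]|[ht hts]]; first by rewrite -IH.
by exists (t, ts); rewrite /= ht IH.
Qed.

Lemma prodseq_uniq (T : eqType) (A : Type) (f : A -> seq T) (l : seq A) :
  (forall x, uniq (f x)) -> uniq (prodseq [seq f x | x <- l]).
Proof.
move=> uf; elim: l => [|x l IH] //=; apply: allpairs_uniq => //.
by move=> [a b] [c d] _ _ /= [-> ->].
Qed.

Lemma sub_all2 (S T : Type) (r1 r2 : S -> T -> bool) :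
  (forall a b, r1 a b -> r2 a b) -> forall s t, all2 r1 s t -> all2 r2 s t.
Proof.
move=> r12; elim=> [|a s IH] [|b t] //= /andP [h1 h2].
by rewrite r12 // IH.
Qed.

Section Trees.
Variable N : nat.
Local Notation ctree := (ctree N).
Local Notation word := (word N).
Local Notation color := (@color N).
Local Notation leaves := (@leaves N).
Local Notation reduced := (@reduced N).

Definition tree_of (i : 'I_N) (u : word) (T : ctree) : bool :=
  [&& reduced T, color T == i & leaves T == u].

Definition children (T : ctree) : seq ctree := let: CNode _ ts := T in ts.

Definition node_trees (sub : 'I_N -> word -> seq ctree) (i : 'I_N) (u : word) : seq ctree :=
  flatten [seq flatten [seq [seq CNode i ts | ts <- prodseq [seq sub vc.1 vc.2 | vc <- zip v cs]]
                       | v <- allwords N (size cs)]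
          | cs <- [seq cs <- splits u | (2 <= size cs)%N]].

(* With fuel n >= |u|, [trees n i u] enumerates RT_u^i. *)
Fixpoint trees (n : nat) (i : 'I_N) (u : word) : seq ctree :=
  if n is n'.+1 then
    (if u == [:: i] then [:: CNode i [::]] else [::]) ++ node_trees (trees n') i u
  else [::].

Lemma mem_node_trees sub i u T :
  reflect (exists cs v ts, [/\ cs \in splits u, (2 <= size cs)%N, size v = size cs,
             all2 (fun t vc => t \in sub vc.1 vc.2) ts (zip v cs) & T = CNode i ts])
          (T \in node_trees sub i u).
Proof.
apply: (iffP flattenP) => [[r /mapP [cs]]|[cs [v [ts [cs_u c2 sv h ->]]]]].
  rewrite mem_filter => /andP [c2 cs_u] ->{r} /flattenP [r /mapP [v]].
  rewrite mem_allwords => /eqP sv ->{r} /mapP [ts]; rewrite mem_prodseq => h ->.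
  by exists cs, v, ts.
exists (flatten [seq [seq CNode i ts | ts <- prodseq [seq sub vc.1 vc.2 | vc <- zip v cs]]
                | v <- allwords N (size cs)]); first by apply: map_f; rewrite mem_filter c2.
apply/flattenP; exists [seq CNode i ts | ts <- prodseq [seq sub vc.1 vc.2 | vc <- zip v cs]].
  by apply: map_f; rewrite mem_allwords sv.
by apply: map_f; rewrite mem_prodseq.
Qed.

Lemma all2_tree_of (ts : seq ctree) (v : word) (cs : seq word) : size v = size cs ->
    all2 (fun t vc => tree_of vc.1 vc.2 t) ts (zip v cs) ->
  [/\ map color ts = v, map leaves ts = cs & all reduced ts].
Proof.
elim: ts v cs => [|t ts IH] [|j v] [|c cs] //= [sv].
by case/andP=> /and3P [-> /eqP -> /eqP ->] /(IH _ _ sv) [-> -> ->].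
Qed.

Lemma all2_zip_self (ts : seq ctree) (r : ctree -> 'I_N * word -> bool) :
  {in ts, forall t, r t (color t, leaves t)} -> all2 r ts (zip (map color ts) (map leaves ts)).
Proof.
elim: ts => //= t ts IH rts; rewrite rts ?mem_head // IH // => t' t't.
by apply: rts; rewrite inE t't orbT.
Qed.

Lemma trees_sound n i u T : T \in trees n i u -> tree_of i u T.
Proof.
elim: n i u T => [|n IH] i u T //=; rewrite mem_cat => /orP [].
  by case: ifP => // /eqP ->; rewrite inE => /eqP ->; rewrite /tree_of /= !eqxx.
case/mem_node_trees => cs [v [ts [/mem_splits [<- _] c2 sv h ->]]].
have [_ ecs ar] := all2_tree_of sv (sub_all2 (fun t vc => IH vc.1 vc.2 t) h).
rewrite -ecs in c2 *.
by case: ts c2 ar {h sv ecs} => [|t [|t' ts]] //= _ ar; rewrite /tree_of /= ar !eqxx.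
Qed.

Lemma trees_children n (ts : seq ctree) v cs : size v = size cs ->
    all2 (fun t vc => t \in trees n vc.1 vc.2) ts (zip v cs) ->
  [/\ map color ts = v, map leaves ts = cs & all reduced ts].
Proof. by move=> sv /(sub_all2 (fun t vc => @trees_sound n vc.1 vc.2 t)) /(all2_tree_of sv). Qed.

Lemma trees_complete n i u T : (size u <= n)%N -> tree_of i u T -> T \in trees n i u.
Proof.
elim: n i u T => [|n IH] i u [c ts] su /and3P [rT /eqP /= cT /eqP lT]; subst c.
  by move: su (leaves_neq0 (CNode i ts)); rewrite /= lT; case: u {lT}.
rewrite /= mem_cat; case: ts rT lT => [|t0 ts0] rT lT.
  by rewrite -lT eqxx mem_head.
set ts := t0 :: ts0 in rT lT *; case/andP: rT => s2 ar.
have ac : all (fun c => c != [::]) [seq leaves t | t <- ts].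
  by apply/allP => c' /mapP [t _ ->]; apply: leaves_neq0.
apply/orP; right; apply/mem_node_trees.
exists [seq leaves t | t <- ts], [seq color t | t <- ts], ts; split; rewrite ?size_map //.
  exact: splits_complete.
apply: all2_zip_self => t tin; apply: IH; last first.
  by rewrite /tree_of !eqxx !andbT; exact: (allP ar t tin).
have := size_block ac (map_f leaves tin); rewrite lT size_map.
by move: su s2; rewrite /ts /=; move: (size ts0) (size u) (size (leaves t)) => a b d; lia.
Qed.

Lemma trees_fuel n m i u : (size u <= n)%N -> (size u <= m)%N -> trees n i u = trees m i u.
Proof.
elim: n m i u => [|n IH] [|m] i u; try by case: u.
move=> sn sm /=; congr (_ ++ _); rewrite /node_trees; congr flatten.
apply/eq_in_map => cs; rewrite mem_filter => /andP [c2 /mem_splits [fc ac]]; congr flatten.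
apply: eq_map => v; congr (map _ (prodseq _)); apply/eq_in_map => vc /mem_zip2 hc.
have := size_block ac hc; rewrite fc => hb.
by apply: IH; move: c2 hb sn sm; move: (size cs) (size vc.2) (size u) => a b c; lia.
Qed.

Lemma trees_uniq n i u : uniq (trees n i u).
Proof.
elim: n i u => [|n IH] i u //=; rewrite cat_uniq; apply/and3P; split.
- by case: ifP.
- apply/hasPn => T /mem_node_trees [cs [v [ts [_ c2 sv h ->]]]].
  case: ifP => // _; rewrite inE; apply/negP => /eqP [e].
  by move: h; rewrite e; case: v cs c2 sv {e} => [|j v] [|c cs].
apply: (uniq_flatten_keyed (k := fun T => map leaves (children T))).
- by rewrite filter_uniq // splits_uniq.
- move=> cs; rewrite mem_filter => /andP [c2 _].
  apply: (uniq_flatten_keyed (k := fun T => map color (children T))).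
  + exact: allwords_uniq.
  + move=> v _; rewrite map_inj_uniq; first exact: prodseq_uniq.
    by move=> a b [].
  + move=> v; rewrite mem_allwords => /eqP sv T /mapP [ts]; rewrite mem_prodseq => h -> /=.
    by have [] := trees_children sv h.
move=> cs; rewrite mem_filter => /andP [c2 _] T /flattenP [r /mapP [v]].
rewrite mem_allwords => /eqP sv ->{r} /mapP [ts]; rewrite mem_prodseq => h -> /=.
by have [] := trees_children sv h.
Qed.

End Trees.

Section TreeAntipode.
Variables (N : nat) (K : comNzRingType).
Local Notation elt := (elt N K).
Local Notation mon := (mon N).
Local Notation gen := (gen N).
Local Notation word := (word N).
Local Notation ctree := (ctree N).
Local Notation color := (@color N).
Local Notation nvert := (@nvert N).
Local Notation lam := (@lambda_dr N K).

Definition tree_term (T : ctree) : elt := scaleH ((-1) ^+ nvert T) (tH (lam T)).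

Definition tree_antipode_gen (i : 'I_N) (u : word) : elt :=
  flatten [seq tree_term T | T <- trees (size u) i u].

Definition tree_antipode (m : mon) : elt :=
  prodH (rev [seq tree_antipode_gen (val g).1 (val g).2 | g <- m]).

Lemma pairing_prodH_tree_terms (ts : seq ctree) k :
  pairing (prodH (rev (map tree_term ts))) k =
  (-1) ^+ sumn (map nvert ts) * pairing (prodH (map lam ts)) (fun a => k (rev a)).
Proof.
elim: ts k => [|t ts IH] k /=; first by rewrite !pairing_oneH expr0 mul1r.
rewrite rev_cons pairing_prodH_rcons IH pairing_mulH addnC exprD -mulrA; congr (_ * _).
rewrite exchange_pairing pairing_scaleH pairing_tH; congr (_ * _).
by apply: eq_pairing => b; apply: eq_pairing => a; rewrite rev_cat.
Qed.

Lemma pairing_tree_term_node i (ts : seq ctree) h : ts != [::] ->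
  pairing (tree_term (CNode i ts)) h =
  - pairing (prodH (rev (map tree_term ts)))
      (fun a => pairing (Yel K i (map color ts)) (fun b => h (a ++ b))).
Proof.
case: ts => // t ts _; rewrite pairing_prodH_tree_terms pairing_scaleH pairing_tH /= pairing_mulH.
rewrite exprS mulN1r mulNr; congr (- (_ * _)).
rewrite [RHS]exchange_pairing; apply: eq_in_pairing => b /supp_Yel [_ rb].
by apply: eq_pairing => a; rewrite rev_cat rb.
Qed.

Lemma pairing_prodseq (Ls : seq (seq ctree)) (H : ctree -> elt) k :
  \sum_(ts <- prodseq Ls) pairing (prodH (rev (map H ts))) k =
  pairing (prodH (rev [seq flatten [seq H t | t <- L] | L <- Ls])) k.
Proof.
elim: Ls k => [|L Ls IH] k /=; first by rewrite big_seq1.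
rewrite big_allpairs_dep /= rev_cons pairing_prodH_rcons.
transitivity (\sum_(t <- L) pairing (prodH (rev [seq flatten [seq H t0 | t0 <- L0] | L0 <- Ls]))
   (fun a => pairing (H t) (fun b => k (a ++ b)))).
  apply: eq_bigr => t _; rewrite -IH; apply: eq_bigr => ts _.
  by rewrite rev_cons pairing_prodH_rcons.
by rewrite -pairing_sum; apply: eq_pairing => a; rewrite pairing_flatten.
Qed.

Lemma pairing_tree_antipode_gen i u h : (2 <= size u)%N ->
  pairing (tree_antipode_gen i u) h =
  - \sum_(cs <- splits u | (2 <= size cs)%N) \sum_(v <- allwords N (size cs))
      pairing (prodH (rev [seq tree_antipode_gen vc.1 vc.2 | vc <- zip v cs]))
        (fun a => pairing (Yel K i v) (fun b => h (a ++ b))).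
Proof.
move=> su; rewrite /tree_antipode_gen; case E: (size u) su => [|n] // su.
rewrite /= pairing_flatten big_cat /=.
have -> : (u == [:: i]) = false by apply/eqP => eu; move: E su; rewrite eu => -[<-].
rewrite big_nil add0r big_flatten /= big_map big_filter -sumrN.
rewrite big_seq_cond [RHS]big_seq_cond; apply: eq_bigr => cs /andP [/mem_splits [fc ac] c2].
rewrite big_allpairs_dep /= -sumrN; apply: eq_big_seq => v; rewrite mem_allwords => /eqP sv.
rewrite big_seq.
under eq_bigr => ts.
  rewrite mem_prodseq => h2; have [ec el _] := trees_children sv h2.
  have tsn : ts != [::] by move: c2; rewrite -el; case: (ts).
  rewrite pairing_tree_term_node // ec; over.
rewrite /= sumrN -big_seq pairing_prodseq; congr (- _).
rewrite -map_comp; congr (pairing (prodH (rev _)) _); apply/eq_in_map => vc /mem_zip2 hc /=.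
have := size_block ac hc; rewrite fc E => hb.
rewrite (@trees_fuel _ n (size vc.2)) //.
by move: c2 hb; move: (size cs) (size vc.2) => x y; lia.
Qed.

Lemma pairing_tree_antipode_letter j x k :
  pairing (tree_antipode_gen j [:: x]) k = if x == j then k [::] else 0.
Proof.
rewrite /tree_antipode_gen /= eqseq_cons andbT cats0; case: ifP => _ /=.
  by rewrite pairing_seq1 expr0 !mul1r.
exact: pairing_nil.
Qed.

Lemma pairing_tree_antipode_cat (a b : mon) k :
  pairing (tree_antipode (a ++ b)) k =
  pairing (tree_antipode b) (fun c => pairing (tree_antipode a) (fun d => k (c ++ d))).
Proof. by rewrite /tree_antipode map_cat rev_cat pairing_prodH_cat. Qed.

Lemma pairing_tree_antipode_prodH (xs : seq elt) k :
  pairing (prodH xs) (fun a => pairing (tree_antipode a) k)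
  = pairing (prodH (rev (map (linext tree_antipode) xs))) k.
Proof.
elim: xs k => [|x xs IH] k /=; first by rewrite !pairing_oneH.
rewrite pairing_mulH rev_cons pairing_prodH_rcons.
transitivity (pairing x (fun a => pairing (prodH (rev [seq linext tree_antipode y | y <- xs]))
   (fun c => pairing (tree_antipode a) (fun d => k (c ++ d))))).
  by apply: eq_pairing => a; rewrite -IH; apply: eq_pairing => b; rewrite pairing_tree_antipode_cat.
by rewrite exchange_pairing; apply: eq_pairing => c; rewrite pairing_linext.
Qed.

Lemma pairing_linext_Yel j (w : word) k : w != [::] ->
  pairing (linext tree_antipode (Yel K j w)) k = pairing (tree_antipode_gen j w) k.
Proof.
case: w => [|x [|y w]] // _; rewrite pairing_linext.
  rewrite Yel_letter pairing_tree_antipode_letter; case: eqP => _; last exact: pairing_nil.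
  by rewrite pairing_oneH /tree_antipode /= pairing_oneH.
rewrite Yel_Sub // pairing_seq1 mul1r /tree_antipode /= pairing_mulH.
by apply: eq_pairing => a; rewrite pairing_oneH cats0.
Qed.

Lemma eq_pairing_prodH_rev (A : eqType) (l : seq A) (f1 f2 : A -> elt) :
    {in l, forall x k, pairing (f1 x) k = pairing (f2 x) k} ->
  forall k, pairing (prodH (rev (map f1 l))) k = pairing (prodH (rev (map f2 l))) k.
Proof.
elim: l => [|x l IH] f12 k //=; rewrite !rev_cons !pairing_prodH_rcons IH.
  by apply: eq_pairing => a; apply: f12; rewrite mem_head.
by move=> y yl; apply: f12; rewrite inE yl orbT.
Qed.

Lemma tree_antipode_Delta_gen (g : gen) h :
  pairing (Delta_gen K g) (fun p => pairing (tree_antipode p.1) (fun w => h (w ++ p.2))) = 0.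
Proof.
move: g => [[i u] su]; rewrite pairing_Delta_gen /=.
transitivity (\sum_(cs <- splits u) \sum_(v <- allwords N (size cs))
  pairing (Yel K i v) (fun b =>
    pairing (prodH (rev [seq tree_antipode_gen vc.1 vc.2 | vc <- zip v cs]))
      (fun w => h (w ++ b)))).
  apply: eq_big_seq => cs /mem_splits [_ ac]; apply: eq_bigr => v _.
  rewrite exchange_pairing; apply: eq_pairing => b.
  rewrite pairing_tree_antipode_prodH -map_comp; apply: eq_pairing_prodH_rev => vc /mem_zip2 hc k.
  by apply: pairing_linext_Yel; apply: (allP ac).
have un : u != [::] by case: (u) su.
rewrite (bigID (fun cs => (size cs < 2)%N)) /= -big_filter splits_short // big_seq1.
rewrite big_allwords1 /= (bigD1_seq i) ?mem_enum ?enum_uniq //= big1_seq ?addr0 => [|j /andP [ji _]];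
  last by rewrite Yel_letter (negbTE ji) pairing_nil.
rewrite Yel_letter eqxx pairing_oneH pairing_mulH.
have -> : pairing (tree_antipode_gen i u) (fun a => pairing (oneH N K) (fun b => h ((a ++ b) ++ [::])))
          = pairing (tree_antipode_gen i u) h.
  by apply: eq_pairing => a; rewrite pairing_oneH !cats0.
rewrite (pairing_tree_antipode_gen _ h su) (eq_bigl (fun cs => (2 <= size cs)%N)) => [|cs];
  last by rewrite -leqNgt.
rewrite addrC; apply/eqP; rewrite subr_eq0; apply/eqP.
by apply: eq_bigr => cs _; apply: eq_bigr => v _; apply: exchange_pairing.
Qed.

Lemma tree_antipode_left : left_antipode tree_antipode.
Proof.
case=> [|g m] h; rewrite /left_conv.
  by rewrite pairing_one2 /= mul1r /tree_antipode /= pairing_oneH.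
rewrite Delta_cons pairing_mul2 /= mul0r.
transitivity (pairing (Delta K m) (fun b => pairing (tree_antipode b.1) (fun c =>
  pairing (Delta_gen K g) (fun a => pairing (tree_antipode a.1) (fun d => h (c ++ (d ++ a.2) ++ b.2)))))).
  rewrite exchange_pairing; apply: eq_pairing => b; rewrite exchange_pairing.
  apply: eq_pairing => a; rewrite pairing_tree_antipode_cat.
  by apply: eq_pairing => c; apply: eq_pairing => d; rewrite !catA.
rewrite -[RHS](pairing0 (Delta K m)); apply: eq_pairing => b.
rewrite -[RHS](pairing0 (tree_antipode b.1)); apply: eq_pairing => c.
exact: (tree_antipode_Delta_gen g (fun e => h (c ++ e ++ b.2))).
Qed.

End TreeAntipode.

Lemma is_antipode_left (N : nat) (K : comNzRingType) (S : mon N -> elt N K) :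
  is_antipode S -> left_antipode S.
Proof.
move=> HS m h; have := proj1 (eqH_pairingP _ _) (HS m).1 h.
rewrite pairing_scaleH pairing_oneH => <-; rewrite pairing_flatten.
apply: eq_bigr => p _; rewrite pairing_scaleH pairing_mulH; congr (_ * _).
by apply: eq_pairing => w; rewrite pairing_seq1 mul1r.
Qed.

Lemma In_mem (T : eqType) (x : T) s : List.In x s <-> x \in s.
Proof.
elim: s => [|y s IH] //=; rewrite inE; split.
  by case=> [->|/IH ->]; rewrite ?eqxx ?orbT.
by case/orP => [/eqP ->|/IH]; [left|right].
Qed.

Lemma NoDup_uniq (T : eqType) (s : seq T) : List.NoDup s <-> uniq s.
Proof.
elim: s => [|x s IH] /=; first by split=> // _; constructor.
split=> [/List.NoDup_cons_iff [xs /IH ->]|/andP [xs /IH us]].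
  by rewrite andbT; apply/negP => /In_mem.
by constructor=> // /In_mem; apply/negP.
Qed.

Section Enumeration.
Variables (N : nat) (i : 'I_N) (u : word N).

Lemma enumRT_trees : enumRT i u (trees (size u) i u).
Proof.
split; first exact/NoDup_uniq/trees_uniq.
move=> T; rewrite In_mem; split=> [/trees_sound|[rT [cT lT]]].
  by case/and3P=> rT /eqP cT /eqP lT.
by apply: trees_complete; rewrite // /tree_of rT cT lT !eqxx.
Qed.

Lemma enumRT_perm ts : enumRT i u ts -> perm_eq ts (trees (size u) i u).
Proof.
case=> /NoDup_uniq uts memts; apply: uniq_perm => //; first exact: trees_uniq.
have [_ memT] := enumRT_trees.
by move=> T; apply/idP/idP => /In_mem => [/memts/memT|/memT/memts] /In_mem.
Qed.

End Enumeration.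

Lemma perm_tree_sum (N : nat) (K : comNzRingType) (ts ts' : seq (ctree N)) :
  perm_eq ts ts' -> eqH (@tree_sum N K ts) (@tree_sum N K ts').
Proof. by move=> pts; apply/eqH_pairingP => h; rewrite !pairing_flatten (perm_big _ pts). Qed.

Lemma antipodeR_Yel (N : nat) (K : comNzRingType) (S : mon N -> elt N K) i (u : word N) :
    (2 <= size u)%N -> is_antipode S ->
  eqH (antipodeR S (Yel K i u)) (tree_sum K (trees (size u) i u)).
Proof.
move=> su HS; apply/eqH_pairingP => h.
rewrite /antipodeR pairing_tH pairing_linext (Yel_Sub K i su) /tH /= pairing_seq1 mul1r.
rewrite (left_antipode_unique (is_antipode_left HS) (@tree_antipode_left N K)).
rewrite /tree_antipode /= pairing_mulH pairing_flatten pairing_flatten.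
apply: eq_bigr => T _; rewrite /tree_term !pairing_scaleH pairing_tH.
by congr (_ * _); apply: eq_pairing => a; rewrite pairing_oneH cats0 revK.
Qed.

Unset Implicit Arguments.

Theorem corollary4 (R : realType) (N : nat) (i : 'I_N) (u : word N)
    (S : mon N -> elt N R[i]) :
  (0 < N)%N -> (2 <= size u)%N ->
  is_antipode S ->
  (exists ts : seq (ctree N), enumRT i u ts) /\
  (forall ts : seq (ctree N), enumRT i u ts ->
     eqH (antipodeR S (@Yel N R[i] i u)) (@tree_sum N R[i] ts)).
Proof.
move=> _ su HS; split; first by exists (trees (size u) i u); exact: enumRT_trees.
move=> ts /enumRT_perm; rewrite perm_sym => pts m.
by rewrite (antipodeR_Yel i su HS m); apply: perm_tree_sum.
Qed.
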